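(* Let $Q$ be a compact metric space, $p_0:Q\to[0,+\infty]$ a function which is not identically $+\infty$, $c:Q\times Q\to[0,+\infty)$ continuous with $c(x,x)=0$ for all $x$, and $f$ a nonnegative Radon measure on $Q$. Let $\mathcal A=\{p:Q\to\overline{\mathbb{R}}\ :\ p\le p_0 \text{ on } Q,\ p \text{ lower semicontinuous on } Q\}$. Then the problem $\max\{F(p)\ :\ p\in\mathcal A\}$ admits a solution $p_{opt}$, where $$F(p)=\int_Q\Big(\max_{y\in T_p(x)}p(y)\Big)\,df(x).$$
   Context: For $p\in\mathcal A$ and $x\in Q$: $v_p(x)=\min_{y\in Q}\{c(x,y)+p(y)\}$ and $T_p(x)=\{y\in Q\ :\ c(x,y)+p(y)=v_p(x)\}$ (the set of locations where a customer living at $x$ optimally buys). The integrand $\max_{y\in T_p(x)}p(y)$ corresponds to the tie-breaking rule that a customer at $x$ chooses, among optimal locations, one maximizing price (equivalently minimizing $c(x,\cdot)$ on $T_p(x)$). *)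

From HB Require Import structures.
From mathcomp Require Import all_boot all_order all_algebra.
From mathcomp Require Import all_classical all_reals all_analysis.
Set Implicit Arguments. Unset Strict Implicit. Unset Printing Implicit Defensive.
Import Order.TTheory GRing.Theory Num.Theory.
Import numFieldNormedType.Exports.
Local Open Scope classical_set_scope.
Local Open Scope ring_scope.
Local Open Scope ereal_scope.

Notation borelQ Q := (g_sigma_algebraType (@open Q)).

Section Market.
Context {R : realType} {Q : pseudoPMetricType R}.

Definition vp (c : Q -> Q -> R) (p : Q -> \bar R) (x : Q) : \bar R :=
  ereal_inf [set (c x y)%:E + p y | y in [set: Q]].

Definition Tp (c : Q -> Q -> R) (p : Q -> \bar R) (x : Q) : set Q :=
  [set y | (c x y)%:E + p y = vp c p x].

Definition maxpT (c : Q -> Q -> R) (p : Q -> \bar R) (x : Q) : \bar R :=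
  ereal_sup [set p y | y in Tp c p x].

Definition admissible (p0 p : Q -> \bar R) : Prop :=
  lower_semicontinuous p /\ (forall x, p x <= p0 x).

Definition Fobj (f : {measure set (borelQ Q) -> \bar R}) (c : Q -> Q -> R)
  (p : Q -> \bar R) : \bar R :=
  \int[f]_(x in [set: borelQ Q]) maxpT c p x.

End Market.

From HB Require Import structures.
From mathcomp Require Import all_boot all_order all_algebra.
From mathcomp Require Import all_classical all_reals all_analysis.
From mathcomp Require Import measurable_realfun lra.
Set Implicit Arguments. Unset Strict Implicit. Unset Printing Implicit Defensive.
Import Order.TTheory GRing.Theory Num.Theory.
Import numFieldNormedType.Exports.
Local Open Scope classical_set_scope.
Local Open Scope ring_scope.

(* A customer's optimal purchase price is unchanged if an admissible price p
   is replaced by the c-transform q(y) = sup_x (v_p(x) - c(x,y)) of its value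
   function: q <= p with equality at every optimal location, and optimal
   locations for p remain optimal for q, so F(p) <= F(q).  Such q are
   c-Lipschitz, |q y - q y'| <= sup_x |c(x,y) - c(x,y')|, and can be assumed
   bounded, since a q that is too negative somewhere is beaten by the zero
   price.  By Arzela-Ascoli these prices form a compact family for uniform
   convergence, on which the integrand is jointly upper semicontinuous in the
   customer and the price; by Fatou's lemma F is then upper semicontinuous, so
   a cluster point of a maximizing sequence is a continuous, hence admissible,
   maximizer. *)

Lemma le_integral_pointwise d (T : measurableType d) (R : realType)
    (mu : {measure set T -> \bar R}) (D : set T) (f g : T -> \bar R) :
  (forall x, (f x <= g x)%E) ->
  (\int[mu]_(x in D) f x <= \int[mu]_(x in D) g x)%E.
Proof.
move=> fg; rewrite /integral; apply: leeB.
  apply: ereal_sup_le => _ [h hf <-]; exists h => // x; apply: le_trans (hf x) _.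
  apply: (@funepos_le _ _ setT) => //; last by rewrite in_setT.
  by move=> y _; rewrite /patch; case: ifP.
apply: ereal_sup_le => _ [h hg <-]; exists h => // x; apply: le_trans (hg x) _.
apply: (@funeneg_le _ _ setT) => //; last by rewrite in_setT.
by move=> y _; rewrite /patch; case: ifP.
Qed.

Section liminf.
Variable R : realType.

Lemma inv_succ_lt (e : R) k : 0 < e -> (Num.Def.archi_bound e^-1 <= k)%N ->
  k.+1%:R^-1 < e.
Proof.
move=> e0 ek; have inv_ge0 : 0 <= e^-1 by rewrite invr_ge0 ltW.
have lt_k : e^-1 < k.+1%:R.
  apply: lt_le_trans (archi_boundP inv_ge0) _.
  by rewrite ler_nat; exact: leq_trans ek (leqnSn k).
by rewrite -[e in _ < e]invrK ltf_pV2 // posrE ?invr_gt0 // ltr0n.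
Qed.

Lemma inv_succ_le (k n : nat) : (k <= n)%N -> n.+1%:R^-1 <= k.+1%:R^-1 :> R.
Proof. by move=> kn; rewrite lef_pV2 ?posrE ?ltr0n // ler_nat ltnS. Qed.

Local Open Scope ereal_scope.

Lemma limn_einfE (u : (\bar R)^nat) : limn_einf u = ereal_sup (range (einfs u)).
Proof. by rewrite limn_einf_lim; apply: cvg_lim => //; exact: cvg_einfs_sup. Qed.

Lemma le_limn_einf (u : (\bar R)^nat) (a : R) :
  (forall e : R, (0 < e)%R -> exists K, forall k, (K <= k)%N -> (a - e)%:E <= u k) ->
  a%:E <= limn_einf u.
Proof.
move=> u_ge; rewrite limn_einfE; apply/lee_subgt0Pr => e e0.
have [K uK] := u_ge e e0.
apply: le_trans (ereal_sup_ubound _); last by exists K.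
by apply: le_ereal_inf_tmp => _ [k /= Kk <-]; rewrite -EFinB; exact: uK.
Qed.

Lemma limn_einf_le (u : (\bar R)^nat) (b : R) :
  (forall k, u k <= (b + k.+1%:R^-1)%:E) -> limn_einf u <= b%:E.
Proof.
move=> u_le; rewrite limn_einfE; apply: ge_ereal_sup => _ [n _ <-].
apply/lee_addgt0Pr => e e0.
pose m := maxn n (Num.Def.archi_bound e^-1).
apply: (@le_trans _ _ (u m)).
  by apply: ereal_inf_lbound; exists m => //=; exact: leq_maxl.
apply: le_trans (u_le m) _; rewrite -EFinD lee_fin lerD2l.
by apply/ltW/inv_succ_lt => //; exact: leq_maxr.
Qed.

End liminf.

Section compact_space.
Context {R : realType} {T : topologicalType}.
Hypothesis cT : compact [set: T].

Lemma near_uniform_compact {S : topologicalType} (g : S * T -> R) x (e : R) :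
  continuous g -> 0 < e -> \forall x' \near x, forall y, `|g (x', y) - g (x, y)| < e.
Proof.
move=> g_cont e0; have [/(_ cT) cover _] := compact_near_coveringP [set: T].
have near_pt y : [set: T] y -> \forall y' \near y & x' \near x,
    `|g (x', y') - g (x, y')| < e.
  move=> _; have /cvgrPdist_lt/(_ (e / 2)) := g_cont (x, y).
  rewrite divr_gt0 // => /(_ isT) [[A B] /= [nA nB] sAB].
  exists (B, A) => // -[y' x'] /= [By' Ax'].
  have := sAB (x', y') (conj Ax' By'); have := sAB (x, y') (conj (nbhs_singleton nA) By').
  by rewrite /= !ltr_norml => /andP[? ?] /andP[? ?]; apply/andP; split; lra.
apply: filterS (cover S (nbhs x) (fun x' y => `|g (x', y) - g (x, y)| < e) _ near_pt).
by move=> x' sub y; exact: sub.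
Qed.

Lemma equicontinuous_uniform_cluster (W : set (T -> R)) (lo hi : R) (u : nat -> T -> R) :
  (forall n, W (u n)) -> (forall w y, W w -> lo <= w y <= hi) ->
  (forall y (e : R), 0 < e -> \forall y' \near y, forall w, W w -> `|w y - w y'| < e) ->
  exists v : T -> R, forall e : R, 0 < e -> forall N, exists2 n, (N <= n)%N &
    forall y, `|v y - u n y| < e.
Proof.
move=> Wu W_bnd W_equi.
have W_ptw : pointwise_precompact W id.
  move=> y; apply: (@precompact_subset _ _ `[lo, hi]).
    by move=> _ [w Ww <-]; rewrite /= in_itv /=; exact: W_bnd.
  by apply: compact_precompact; [exact: Rhausdorff|exact: segment_compact].
have W_ec : equicontinuous W id.
  move=> y E; rewrite -entourage_from_ballE => -[e /= e0 sE].
  apply: filterS (W_equi y e e0) => y' near_y' w Ww; apply: sE.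
  by rewrite /= -ball_normE /=; exact: near_y'.
have := @pointwise_precompact_equicontinuous T R (@Rhausdorff R) W W_ptw W_ec.
rewrite precompactE => W_cpt.
pose F : set_system {family compact, T -> R} := u @ \oo.
have FW : F (closure (W : set {family compact, T -> R})).
  by exists 0%N => // n _ /=; apply: subset_closure; exact: Wu.
have F_proper : ProperFilter F by exact: fmap_proper_filter.
have [v [_ v_clu]] := W_cpt F F_proper FW.
exists v => e e0 N.
have near_v := @fam_nbhs T R compact [set: T] [set xy | ball xy.1 e xy.2] v
  (entourage_ball _ (PosNum e0)) cT.
have FN : F [set w | exists2 n, (N <= n)%N & w = u n] by exists N => // n Nn /=; exists n.
have [_ [[n Nn ->] vn]] := v_clu _ _ FN near_v.
by exists n => // y; have := vn y I; rewrite /= -ball_normE.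
Qed.

Lemma lsc_bounded_below (p : T -> \bar R) : lower_semicontinuous p ->
  (forall y, (-oo < p y)%E) -> exists N : R, forall y, (N%:E < p y)%E.
Proof.
move=> p_lsc p_gtNy; have [/(_ cT) cover _] := compact_near_coveringP [set: T].
suff : \forall n \near \oo, [set: T] `<=` (fun y => ((- n%:R)%:E < p y)%E).
  by case=> n _ Hn; exists (- n%:R) => y; exact: (Hn n (leqnn n) y).
apply: (cover nat \oo (fun n y => ((- n%:R)%:E < p y)%E)) => y _.
have [n0 n0_lt] : exists n0 : nat, ((- n0%:R)%:E < p y)%E.
  move: (p_gtNy y); case: (p y) => [r| |] // _; last by exists 0%N; rewrite ltry.
  exists (Num.Def.archi_bound `|r|); rewrite lte_fin.
  have := archi_boundP (normr_ge0 r); have : - r <= `|r| by rewrite -normrN ler_norm.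
  lra.
have [V nV V_gt] := p_lsc y _ n0_lt.
exists (V, [set n | (n0 <= n)%N]); first by split => //; exists n0.
case=> y' n /= [Vy' n0n]; apply: le_lt_trans (V_gt y' Vy').
by rewrite lee_fin lerN2 ler_nat.
Qed.

Lemma continuous_lower_semicontinuous (q : T -> R) : continuous q ->
  lower_semicontinuous (fun y => (q y)%:E).
Proof.
move=> q_cont; apply/lower_semicontinuousP => a.
move/continuousP : q_cont => /(_ _ (@open_gt _ a)).
by congr open; apply/seteqP; split => x /=; rewrite lte_fin.
Qed.

End compact_space.

Section market.
Context {R : realType} {Q : pseudoPMetricType R}.
Hypothesis cQ : compact [set: Q].
Variable c : Q -> Q -> R.
Hypothesis c_cont : continuous (fun xy : Q * Q => c xy.1 xy.2).
Hypothesis c_ge0 : forall x y, 0 <= c x y.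
Hypothesis c_diag : forall x, c x x = 0.

Local Notation E q := (fun y => (q y)%:E).

Lemma near_c_left x (e : R) : 0 < e ->
  \forall x' \near x, forall y, `|c x' y - c x y| < e.
Proof. exact: (@near_uniform_compact R Q cQ Q (fun xy => c xy.1 xy.2) x e c_cont). Qed.

Lemma near_c_right y (e : R) : 0 < e ->
  \forall y' \near y, forall x, `|c x y' - c x y| < e.
Proof.
apply: (@near_uniform_compact R Q cQ Q (fun yx => c yx.2 yx.1) y e) => z.
exact (continuous_comp (@swap_continuous Q Q z) (@c_cont (z.2, z.1))).
Qed.

Lemma continuous_c x : continuous (c x).
Proof.
move=> y; apply/cvgrPdist_lt => e e0.
by apply: filterS (near_c_right y e0) => y' near_y'; rewrite distrC; exact: near_y'.
Qed.

Definition c_lipschitz (q : Q -> R) := forall y y' (e : R),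
  (forall x, `|c x y - c x y'| <= e) -> `|q y - q y'| <= e.

Lemma near_c_lipschitz y (e : R) : 0 < e ->
  \forall y' \near y, forall q, c_lipschitz q -> `|q y - q y'| < e.
Proof.
move=> e0; apply: filterS (near_c_right y (divr_gt0 e0 (ltr0n _ 2))) => y' near_y' q q_lip.
apply: le_lt_trans (q_lip y y' (e / 2) _) _; last by lra.
by move=> x; rewrite distrC; exact/ltW/near_y'.
Qed.

Lemma c_lipschitz_continuous q : c_lipschitz q -> continuous q.
Proof.
move=> q_lip y; apply/cvgrPdist_lt => e e0.
by apply: filterS (near_c_lipschitz y e0) => y' /(_ q q_lip).
Qed.

Definition optimal (q : Q -> R) x y := forall z, c x y + q y <= c x z + q z.

Lemma exists_optimal q x : continuous q -> exists y, optimal q x y.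
Proof.
move=> q_cont.
have [|||y _ y_min] := @compact_EVT_min Q R (fun y => c x y + q y) [set: Q].
- by exists x.
- exact: cQ.
- by apply: continuous_subspaceT => y; apply: cvgD; [exact: continuous_c|exact: q_cont].
by exists y => z; apply: y_min; rewrite in_setT.
Qed.

Lemma vp_le p x y : (vp c p x <= (c x y)%:E + p y)%E.
Proof. by apply: ereal_inf_lbound; exists y. Qed.

Lemma vp_optimal q x y : optimal q x y -> vp c (E q) x = (c x y + q y)%:E.
Proof.
move=> y_opt; apply/eqP; rewrite eq_le; apply/andP; split; first exact: vp_le.
by apply: le_ereal_inf_tmp => _ [z _ <-]; rewrite -EFinD lee_fin; exact: y_opt.
Qed.

Lemma TpE q x y : Tp c (E q) x y <-> optimal q x y.
Proof.
split; last by move=> y_opt; rewrite /Tp /= (vp_optimal y_opt).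
by rewrite /Tp /= => y_opt z; rewrite -lee_fin !EFinD y_opt; exact: vp_le.
Qed.

Lemma maxpT_le p x y : (maxpT c p x <= (c x y)%:E + p y)%E.
Proof.
apply: ge_ereal_sup => _ [z z_opt <-]; rewrite /Tp /= in z_opt.
apply: (@le_trans _ _ ((c x z)%:E + p z)%E).
  by apply: lee_paddl => //; rewrite lee_fin.
by rewrite z_opt; exact: vp_le.
Qed.

Definition paid (q : Q -> R) := maxpT c (E q).

Lemma paid_ge q x y : optimal q x y -> ((q y)%:E <= paid q x)%E.
Proof. by move=> y_opt; apply: ereal_sup_ubound; exists y => //; exact/TpE. Qed.

Lemma paid_le q x : (paid q x <= (q x)%:E)%E.
Proof. by have := maxpT_le (E q) x x; rewrite c_diag add0e. Qed.

Lemma paid0_ge0 x : (0%:E <= paid (cst 0%R) x)%E.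
Proof. by apply: (@paid_ge (cst 0%R) x x) => z; rewrite /cst c_diag !addr0 c_ge0. Qed.

Lemma paid_fin q x : continuous q ->
  exists r : R, paid q x = r%:E /\ (exists y, q y <= r) /\ r <= q x.
Proof.
move=> q_cont; have [y y_opt] := exists_optimal x q_cont.
move: (paid_ge y_opt) (paid_le q x); case: (paid q x) => [r| |] //= lo hi.
by exists r; split => //; split; [exists y|]; rewrite -lee_fin.
Qed.

Lemma optimality_gap q x (b : R) : continuous q ->
  (forall y, optimal q x y -> q y < b) ->
  exists2 eta : R, 0 < eta &
    forall y z, optimal q x z -> b <= q y -> c x z + q z + eta <= c x y + q y.
Proof.
move=> q_cont opt_lt.
have [y0 y0_opt] := exists_optimal x q_cont.
pose K := [set y | b <= q y].
have [[y1 Ky1]|K0] := pselect (K !=set0); last first.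
  by exists 1 => // y z _ by_; exfalso; apply: K0; exists y.
have cK : compact K.
  apply: (subclosed_compact _ cQ) => //.
  rewrite (_ : K = q @^-1` [set r | b <= r]) //.
  by move/continuous_closedP : q_cont; apply; exact: closed_ge.
have [|||z1 Kz1 z1_min] := @compact_EVT_min Q R (fun y => c x y + q y) K.
- by exists y1.
- exact: cK.
- by apply: continuous_subspaceT => y; apply: cvgD; [exact: continuous_c|exact: q_cont].
have bz1 : b <= q z1 by move: Kz1; rewrite inE.
have z1_notopt : ~ optimal q x z1 by move/opt_lt; rewrite ltNge bz1.
exists (c x z1 + q z1 - (c x y0 + q y0)).
  rewrite subr_gt0 lt_neqAle y0_opt andbT.
  by apply/eqP => eq01; apply: z1_notopt => z; rewrite -eq01; exact: y0_opt.
move=> y z z_opt by_; have := z_opt y0; have := z1_min y; rewrite inE => /(_ by_).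
lra.
Qed.

Lemma optimal_perturb q x (a b : R) : continuous q -> b < a ->
  (forall y, optimal q x y -> q y < b) ->
  exists2 d : R, 0 < d & \forall x' \near x, forall q' : Q -> R,
    (forall y, `|q' y - q y| < d) -> forall y', optimal q' x' y' -> q' y' <= a.
Proof.
move=> q_cont ba opt_lt.
have [eta eta0 gap] := optimality_gap q_cont opt_lt.
have [y0 y0_opt] := exists_optimal x q_cont.
(* moving x and q by less than eta / 4 cannot close the optimality gap eta *)
exists (Num.min (eta / 4) (a - b)); first by rewrite lt_min divr_gt0 //= subr_gt0.
apply: filterS (near_c_left x (divr_gt0 eta0 (ltr0n _ 4))) => x' near_x' q' near_q y' y'_opt.
have d_eta : Num.min (eta / 4) (a - b) <= eta / 4 by rewrite ge_min lexx.
have d_ab : Num.min (eta / 4) (a - b) <= a - b by rewrite ge_min lexx orbT.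
set d := Num.min _ _ in near_q d_eta d_ab.
rewrite leNgt; apply/negP => a_lt.
move: (near_q y') (near_q y0) (near_x' y') (near_x' y0).
rewrite !ltr_norml => /andP[? ?] /andP[? ?] /andP[? ?] /andP[? ?].
have by' : b <= q y' by lra.
have := gap y' y0 y0_opt by'; have := y'_opt y0.
lra.
Qed.

Lemma paid_usc q x (a : R) : continuous q -> (paid q x < a%:E)%E ->
  exists2 d : R, 0 < d & \forall x' \near x, forall q' : Q -> R,
    (forall y, `|q' y - q y| < d) -> (paid q' x' <= a%:E)%E.
Proof.
move=> q_cont; have [r [paidE _]] := paid_fin x q_cont.
rewrite paidE lte_fin => ra.
have [|y y_opt|d d0 near_d] := @optimal_perturb q x a ((r + a) / 2) q_cont.
- lra.
- by have := paid_ge y_opt; rewrite paidE lee_fin; lra.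
exists d => //; apply: filterS near_d => x' opt_le q' near_q.
apply: ge_ereal_sup => _ [y' /TpE y'_opt <-]; rewrite lee_fin.
exact: opt_le near_q y' y'_opt.
Qed.

Lemma open_paid_lt q (a : R) : continuous q -> open [set x | (paid q x < a%:E)%E].
Proof.
move=> q_cont; rewrite openE => x /= paid_lt.
have [r [paidE _]] := paid_fin x q_cont.
rewrite paidE lte_fin in paid_lt.
have [|d d0 near_d] := @paid_usc q x ((r + a) / 2) q_cont.
  by rewrite paidE lte_fin; lra.
rewrite /interior; apply: filterS near_d => x' paid_le.
apply: (le_lt_trans (paid_le q _)); first by move=> y; rewrite subrr normr0.
by rewrite lte_fin; lra.
Qed.

Lemma measurable_paid q : continuous q ->
  measurable_fun [set: borelQ Q] (fun x : borelQ Q => paid q x).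
Proof.
move=> q_cont; apply: (measurability _ (ErealGenInftyO.measurableE R)).
move=> _ [_ [a ->] <-]; rewrite setTI preimage_itvNyo.
by apply: sub_sigma_algebra; exact: open_paid_lt.
Qed.

Definition ctransform (u : Q -> R) y := sup [set u x - c x y | x in [set: Q]].

Section ctransform.
Variables (u : Q -> R) (B : R).
Hypothesis u_ub : forall x, u x <= B.

Let ctransform_has_ubound y : has_ubound [set u x - c x y | x in [set: Q]].
Proof. by exists B => _ [x _ <-]; have := u_ub x; have := c_ge0 x y; lra. Qed.

Lemma ctransform_ge x y : u x - c x y <= ctransform u y.
Proof. by apply: ub_le_sup; [exact: ctransform_has_ubound|exists x]. Qed.

Lemma ctransform_le y (b : R) : (forall x, u x - c x y <= b) -> ctransform u y <= b.
Proof.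
by move=> ub; apply: ge_sup => [|_ [x _ <-]]; [exists (u y - c y y), y|exact: ub].
Qed.

Lemma ctransform_le_ub y : ctransform u y <= B.
Proof. by apply: ctransform_le => x; have := u_ub x; have := c_ge0 x y; lra. Qed.

Lemma ctransform_lipschitz : c_lipschitz (ctransform u).
Proof.
move=> y y' e c_near; rewrite ler_norml.
have le_shift z z' : (forall x, `|c x z - c x z'| <= e) ->
    ctransform u z <= ctransform u z' + e.
  move=> near_z; apply: ctransform_le => x; have := ctransform_ge x z'.
  by move: (near_z x); rewrite ler_norml => /andP[? ?]; lra.
have c_near' x : `|c x y' - c x y| <= e by rewrite distrC; exact: c_near.
have := le_shift _ _ c_near; have := le_shift _ _ c_near'.
by move=> ? ?; apply/andP; split; lra.
Qed.

Variable p : Q -> \bar R.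
Hypothesis vpE : forall x, vp c p x = (u x)%:E.

Lemma ctransform_le_price y : ((ctransform u y)%:E <= p y)%E.
Proof.
case py: (p y) => [r| |]; last 2 first.
- exact: leey.
- by have := vp_le p y y; rewrite vpE py addeNy leeNy_eq.
rewrite lee_fin; apply: ctransform_le => x.
by have := vp_le p x y; rewrite vpE py -EFinD lee_fin; lra.
Qed.

Lemma maxpT_le_paid_ctransform x : (maxpT c p x <= paid (ctransform u) x)%E.
Proof.
apply: ge_ereal_sup => _ [z z_opt <-]; rewrite /Tp /= vpE in z_opt.
have pz : p z = (u x - c x z)%:E.
  move: z_opt; case: (p z) => [r| |] //= /eqP; rewrite -EFinD eqe => /eqP ?.
  by congr (_%:E); lra.
have qz : ctransform u z = u x - c x z.
  apply/eqP; rewrite eq_le ctransform_ge andbT -lee_fin -pz.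
  exact: ctransform_le_price.
rewrite pz -qz; apply: paid_ge => w; rewrite qz.
by have := ctransform_ge x w; lra.
Qed.

End ctransform.

Lemma vp_bounded p (N B : R) y0 : (forall y, (N%:E < p y)%E) ->
  (forall x, ((c x y0)%:E + p y0 <= B%:E)%E) ->
  exists u : Q -> R, (forall x, vp c p x = (u x)%:E) /\ forall x, N <= u x <= B.
Proof.
move=> p_gt vp_ub.
have vp_fin x : exists r : R, vp c p x = r%:E /\ N <= r <= B.
  have lo : (N%:E <= vp c p x)%E.
    apply: le_ereal_inf_tmp => _ [y _ <-]; apply: le_trans (ltW (p_gt y)) _.
    by apply: lee_paddl => //; rewrite lee_fin.
  move: lo (le_trans (vp_le p x y0) (vp_ub x)).
  by case: (vp c p x) => [r| |] //= lo hi; exists r; rewrite -!lee_fin lo hi.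
have [u u_spec] := choice vp_fin.
by exists u; split => x; case: (u_spec x).
Qed.

Definition cprices (p0 : Q -> \bar R) (L M : R) : set (Q -> R) :=
  [set q | [/\ forall y, ((q y)%:E <= p0 y)%E, forall y, L <= q y <= M & c_lipschitz q]].

Lemma cprices_cst0 p0 y0 (P0 Cm : R) : (forall y, (0 <= p0 y)%E) ->
  p0 y0 = P0%:E -> (forall x y, c x y <= Cm) ->
  cprices p0 (- (Cm + 1)) (Cm + P0) (cst 0%R).
Proof.
move=> p0_ge0 p0y0 c_ub; have := c_ub y0 y0; rewrite c_diag => Cm_ge0.
have : (0%:E <= P0%:E)%E by rewrite -p0y0.
rewrite lee_fin => P0_ge0.
split => [y|y|y y' e c_near]; first exact: p0_ge0.
  by rewrite /cst; apply/andP; split; lra.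
by rewrite /cst subrr normr0; exact: le_trans (normr_ge0 _) (c_near y).
Qed.

Lemma admissible_dominated p0 y0 (P0 Cm : R) p :
  (forall y, (0 <= p0 y)%E) -> p0 y0 = P0%:E -> (forall x y, c x y <= Cm) ->
  admissible p0 p -> exists2 q, cprices p0 (- (Cm + 1)) (Cm + P0) q &
    forall x, (maxpT c p x <= paid q x)%E.
Proof.
move=> p0_ge0 p0y0 c_ub [p_lsc p_le].
have zero_price := cprices_cst0 p0_ge0 p0y0 c_ub.
have [[y1 py1]|p_gtNy] := pselect (exists y1, p y1 = -oo%E).
  exists (cst 0%R) => // x; apply: le_trans (maxpT_le p x y1) _.
  by rewrite py1 addeNy leNye.
have {}p_gtNy y : (-oo < p y)%E.
  by rewrite ltNye; apply/eqP => py; apply: p_gtNy; exists y.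
have [N N_lt] := lsc_bounded_below cQ p_lsc p_gtNy.
have [|u [vpE u_bnd]] := @vp_bounded p N (Cm + P0) y0 N_lt.
  move=> x; rewrite EFinD -p0y0.
  by apply: leeD; [rewrite lee_fin; exact: c_ub|exact: p_le].
have u_ub x : u x <= Cm + P0 by case/andP: (u_bnd x).
have dom x := maxpT_le_paid_ctransform u_ub vpE x.
have [[y2 qy2]|q_ge] := pselect (exists y2, ctransform u y2 < - (Cm + 1)).
  (* then every customer pays a negative price *)
  exists (cst 0%R) => // x; apply: le_trans (dom x) _.
  apply: le_trans (maxpT_le _ x y2) (le_trans _ (paid0_ge0 x)) => /=.
  by rewrite -EFinD lee_fin; have := c_ub x y2; lra.
exists (ctransform u); last exact: dom.
split.
- by move=> y; apply: le_trans (ctransform_le_price vpE y) (p_le y).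
- move=> y; rewrite (ctransform_le_ub u_ub) andbT leNgt.
  by apply/negP => ?; apply: q_ge; exists y.
- exact: ctransform_lipschitz u_ub.
Qed.

Lemma FobjE (f : {measure set (borelQ Q) -> \bar R}) q :
  Fobj f c (E q) = (\int[f]_(x in [set: borelQ Q]) paid q x)%E.
Proof. by []. Qed.

Section maximization.
Variables (p0 : Q -> \bar R) (L M : R).
Variable f : {finite_measure set (borelQ Q) -> \bar R}.
Local Notation C := (cprices p0 L M).

Let mass := fine (f [set: borelQ Q]).

Let massE : (f : {measure set (borelQ Q) -> \bar R}) [set: borelQ Q] = mass%:E.
Proof. by rewrite /mass fineK // fin_num_measure. Qed.

Let int_cst (a : R) : (\int[f]_(x in [set: borelQ Q]) cst a%:E x = (a * mass)%:E)%E.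
Proof. by rewrite integral_cst // EFinM massE. Qed.

Lemma cprices_continuous q : C q -> continuous q.
Proof. by case=> _ _; exact: c_lipschitz_continuous. Qed.

Lemma paid_bounded q x : C q -> exists r : R, paid q x = r%:E /\ L <= r <= M.
Proof.
move=> Cq; have [r [paidE [[y qy] rqx]]] := paid_fin x (cprices_continuous Cq).
case: Cq => _ q_bnd _; exists r; split => //.
by move: (q_bnd x) (q_bnd y) => /andP[? ?] /andP[? ?]; apply/andP; split; lra.
Qed.

Lemma integrable_paid q : C q -> f.-integrable [set: borelQ Q] (paid q).
Proof.
move=> Cq.
apply: (@le_integrable _ _ _ f [set: borelQ Q] measurableT _
  (EFin \o cst (`|L| + `|M|)) (measurable_paid (cprices_continuous Cq))); last first.
  exact: finite_measure_integrable_cst.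
move=> x _; have [r [-> /andP[? ?]]] := paid_bounded x Cq.
rewrite /comp /cst !abse_EFin lee_fin [X in _ <= X]ger0_norm ?addr_ge0 // ler_norml.
have := ler_norm L; have := ler_norm M.
have : - L <= `|L| by rewrite -normrN ler_norm.
have : - M <= `|M| by rewrite -normrN ler_norm.
by move=> *; apply/andP; split; lra.
Qed.

Lemma Fobj_fin_num q : C q -> Fobj f c (E q) \is a fin_num.
Proof. by move=> Cq; rewrite FobjE; exact: integrable_fin_num (integrable_paid Cq). Qed.

Lemma Fobj_le q : C q -> (Fobj f c (E q) <= (M * mass)%:E)%E.
Proof.
move=> Cq; rewrite FobjE -int_cst; apply: le_integral_pointwise => x.
by have [r [-> /andP[_ ?]]] := paid_bounded x Cq; rewrite lee_fin.
Qed.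

Lemma Fobj_cst0_ge0 : (0%:E <= Fobj f c (E (cst 0%R)))%E.
Proof. by apply: integral_ge0 => x _; exact: paid0_ge0. Qed.

Lemma cprices_uniform_closed (u : nat -> Q -> R) v : (forall n, C (u n)) ->
  (forall e : R, 0 < e -> exists n, forall y, `|v y - u n y| < e) -> C v.
Proof.
move=> Cu uv; split.
- move=> y; apply/lee_addgt0Pr => e e0; have [n vn] := uv e e0.
  case: (Cu n) => /(_ y) un_le _ _.
  apply: (@le_trans _ _ ((u n y)%:E + e%:E)%E); last exact: leeD2r.
  by move: (vn y); rewrite -EFinD lee_fin ltr_norml => /andP[? ?]; lra.
- move=> y; apply/andP; split; apply/ler_addgt0Pr => e e0; have [n vn] := uv e e0;
    case: (Cu n) => _ /(_ y) /andP[? ?] _; move: (vn y);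
    by rewrite ltr_norml => /andP[? ?]; lra.
- move=> y y' e c_near; apply/ler_addgt0Pr => e' e'0.
  have [n vn] := uv (e' / 2) (divr_gt0 e'0 (ltr0n _ 2)).
  case: (Cu n) => _ _ /(_ y y' e c_near).
  move: (vn y) (vn y'); rewrite !ler_norml !ltr_norml.
  by move=> /andP[? ?] /andP[? ?] /andP[? ?]; apply/andP; split; lra.
Qed.

Lemma paid_limsup (u : nat -> Q -> R) v x : (forall k, C (u k)) -> C v ->
  (forall k y, `|v y - u k y| < k.+1%:R^-1) ->
  (M%:E - paid v x <= limn_einf (fun k => M%:E - paid (u k) x))%E.
Proof.
move=> Cu Cv uv; have [r [paidE _]] := paid_bounded x Cv.
rewrite paidE -EFinB; apply: le_limn_einf => e e0.
have [|d d0 near_d] := @paid_usc v x (r + e) (cprices_continuous Cv).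
  by rewrite paidE lte_fin ltrDl.
exists (Num.Def.archi_bound d^-1) => k dk.
have paid_le : (paid (u k) x <= (r + e)%:E)%E.
  apply: (nbhs_singleton near_d) => y; rewrite distrC.
  exact: lt_trans (uv k y) (inv_succ_lt d0 dk).
have [r' [paidE' _]] := paid_bounded x (Cu k).
by rewrite paidE' -EFinB lee_fin; rewrite paidE' lee_fin in paid_le; lra.
Qed.

Lemma Fobj_usc (u : nat -> Q -> R) v (s : R) : (forall k, C (u k)) -> C v ->
  (forall k y, `|v y - u k y| < k.+1%:R^-1) ->
  (forall k, ((s - k.+1%:R^-1)%:E < Fobj f c (E (u k)))%E) ->
  (s%:E <= Fobj f c (E v))%E.
Proof.
move=> Cu Cv uv Fu_gt.
pose h k x := (M%:E - paid (u k) x)%E.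
have h_meas k : measurable_fun [set: borelQ Q] (h k).
  apply: emeasurable_funB; first exact: measurable_cst.
  exact: measurable_paid (cprices_continuous (Cu k)).
have h_ge0 k x : [set: borelQ Q] x -> (0 <= h k x)%E.
  move=> _; have [r [paidE /andP[_ ?]]] := paid_bounded x (Cu k).
  by rewrite /h paidE -EFinB lee_fin subr_ge0.
have int_M : f.-integrable [set: borelQ Q] (fun _ => M%:E).
  exact: finite_measure_integrable_cst.
have int_h q : C q -> (\int[f]_(x in [set: borelQ Q]) (M%:E - paid q x) =
    (M * mass)%:E - Fobj f c (E q))%E.
  by move=> Cq; rewrite integralB //; [rewrite -int_cst|exact: integrable_paid].
have lower : ((M * mass)%:E - Fobj f c (E v) <=
    \int[f]_(x in [set: borelQ Q]) limn_einf (h^~ x))%E.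
  rewrite -int_h //; apply: le_integral_pointwise => x; exact: paid_limsup.
have upper : (limn_einf (fun k => \int[f]_(x in [set: borelQ Q]) h k x) <=
    (M * mass - s)%:E)%E.
  apply: limn_einf_le => k; rewrite int_h //.
  move: (Fu_gt k) (Fobj_fin_num (Cu k)).
  case: (Fobj f c (E (u k))) => [t| |] //; rewrite lte_fin -EFinB lee_fin => Ft _.
  by move: (M * mass) (k.+1%:R^-1) Ft => Mm a; lra.
have := le_trans lower (le_trans (fatou f measurableT h_meas h_ge0) upper).
move: (Fobj_fin_num Cv); case: (Fobj f c (E v)) => [Fv| |] // _.
by rewrite -EFinB !lee_fin; move: (M * mass) => Mm; lra.
Qed.

Lemma exists_max_cprice : C (cst 0%R) ->
  exists2 v, C v & forall q, C q -> (Fobj f c (E q) <= Fobj f c (E v))%E.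
Proof.
move=> C0; pose S := ereal_sup [set Fobj f c (E q) | q in C].
have [s Ss] : exists s : R, S = s%:E.
  have S_ge0 : (0%:E <= S)%E.
    by apply: le_trans Fobj_cst0_ge0 (ereal_sup_ubound _); exists (cst 0%R).
  have S_le : (S <= (M * mass)%:E)%E.
    by apply: ge_ereal_sup => _ [q Cq <-]; exact: Fobj_le.
  by move: S_ge0 S_le; case: S => [t| |] // _ _; exists t.
have max_seq n : exists q, C q /\ ((s - n.+1%:R^-1)%:E < Fobj f c (E q))%E.
  have : ((s - n.+1%:R^-1)%:E < S)%E.
    by rewrite Ss lte_fin ltrBlDr ltrDl invr_gt0 ltr0n.
  by case/ereal_sup_gt => _ [q Cq <-] ?; exists q.
have [u u_spec] := choice max_seq.
have C_bnd q y : C q -> L <= q y <= M by case=> _ /(_ y).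
have C_equi y (e : R) : 0 < e -> \forall y' \near y, forall q, C q -> `|q y - q y'| < e.
  move=> e0; apply: filterS (near_c_lipschitz y e0) => y' near_y' q [_ _ q_lip].
  exact: near_y' q q_lip.
have [v v_clu] := equicontinuous_uniform_cluster cQ (fun n => (u_spec n).1) C_bnd C_equi.
have Cv : C v.
  apply: (cprices_uniform_closed (fun n => (u_spec n).1)) => e e0.
  by have [n _ vn] := v_clu e e0 0%N; exists n.
have sub k : exists n, (k <= n)%N /\ forall y, `|v y - u n y| < k.+1%:R^-1.
  have k_pos : 0 < k.+1%:R^-1 :> R by rewrite invr_gt0 ltr0n.
  by have [n kn vn] := v_clu _ k_pos k; exists n.
have [phi phi_spec] := choice sub.
have s_le : (s%:E <= Fobj f c (E v))%E.
  apply: (@Fobj_usc (fun k => u (phi k))) => //.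
  - by move=> k; exact: (u_spec (phi k)).1.
  - by move=> k y; exact: (phi_spec k).2.
  - move=> k; apply: le_lt_trans (u_spec (phi k)).2.
    by rewrite lee_fin lerD2l lerN2; exact: inv_succ_le (phi_spec k).1.
exists v => // q Cq; apply: (@le_trans _ _ S); first by apply: ereal_sup_ubound; exists q.
by rewrite Ss.
Qed.

End maximization.

End market.

Local Open Scope ereal_scope.

Theorem mainTheorem3 (R : realType) (Q : pseudoPMetricType R)
  (hQ : hausdorff_space Q) (cQ : compact [set: Q])
  (p0 : Q -> \bar R) (p0_ge0 : forall x, 0 <= p0 x)
  (p0_fin : exists x, p0 x != +oo)
  (c : Q -> Q -> R) (c_cont : continuous (fun xy : Q * Q => c xy.1 xy.2))
  (c_ge0 : forall x y, (0 <= c x y)%R) (c_diag : forall x, c x x = 0%R)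
  (f : {finite_measure set (borelQ Q) -> \bar R}) :
  exists popt : Q -> \bar R, admissible p0 popt /\
    forall p : Q -> \bar R, admissible p0 p -> Fobj f c p <= Fobj f c popt.
Proof.
have [y0 p0y0_fin] := p0_fin.
have [P0 p0y0] : exists P0 : R, p0 y0 = P0%:E.
  by move: p0y0_fin (p0_ge0 y0); case: (p0 y0) => [r| |] // _ _; exists r.
have [Cm c_ub] : exists Cm : R, forall x y, (c x y <= Cm)%R.
  have [|||z _ z_max] := @compact_EVT_max (Q * Q)%type R (fun xy => c xy.1 xy.2)
    ([set: Q] `*` [set: Q]).
  - by exists (y0, y0).
  - exact: compact_setX.
  - exact: continuous_subspaceT.
  by exists (c z.1 z.2) => x y; apply: (z_max (x, y)); rewrite inE.
have [v Cv v_max] := exists_max_cprice cQ c_cont c_ge0 c_diag f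
  (cprices_cst0 c_diag p0_ge0 p0y0 c_ub).
exists (fun y => (v y)%:E); split.
  split; last by case: Cv.
  exact/continuous_lower_semicontinuous/(cprices_continuous cQ c_cont Cv).
move=> p p_adm.
have [q Cq q_dom] := admissible_dominated cQ c_ge0 c_diag p0_ge0 p0y0 c_ub p_adm.
by apply: le_trans (v_max q Cq); apply: le_integral_pointwise.

Qed.
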